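(* Let $A$ be an Archimedean semiprime $f$-algebra which is bounded quasi-inversion closed, and let $a\in A$ with $a\le 0$. Then $a$ is quasi-invertible and its quasi-inverse $a^\ast$ satisfies $0\le a^\ast$.
   Context: An $f$-algebra is a real associative algebra that is a vector lattice with $A_+A_+\subseteq A_+$ and such that $a\wedge b=0$ implies $ac\wedge b=ca\wedge b=0$ for all $c\in A_+$; it is semiprime if $0$ is its only nilpotent element. An element $a\in A$ is quasi-invertible if there is $a^\ast\in A$ (necessarily unique, called the quasi-inverse) with $a+a^\ast=aa^\ast$; $Q(A)$ denotes the set of such elements. $A$ is bounded quasi-inversion closed if for every $a\in A$, $|a|\le|a^2-a|$ implies $a\in Q(A)$. *)

From HB Require Import structures.
From mathcomp Require Import all_boot all_order all_algebra.
From mathcomp Require Import reals.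
Set Implicit Arguments. Unset Strict Implicit. Unset Printing Implicit Defensive.
Import Order.TTheory GRing.Theory Num.Theory.
Local Open Scope ring_scope.

Record rieszAlgebra (R : realType) := RieszAlgebra {
  ra_V :> lmodType R;
  ra_mul : ra_V -> ra_V -> ra_V;
  ra_le : ra_V -> ra_V -> Prop;
  ra_meet : ra_V -> ra_V -> ra_V;
  ra_join : ra_V -> ra_V -> ra_V;
  ra_mulA : forall x y z, ra_mul x (ra_mul y z) = ra_mul (ra_mul x y) z;
  ra_mulDl : forall x y z, ra_mul (x + y) z = ra_mul x z + ra_mul y z;
  ra_mulDr : forall x y z, ra_mul x (y + z) = ra_mul x y + ra_mul x z;
  ra_mulZl : forall (c : R) x y, ra_mul (c *: x) y = c *: ra_mul x y;
  ra_mulZr : forall (c : R) x y, ra_mul x (c *: y) = c *: ra_mul x y;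
  ra_le_refl : forall x, ra_le x x;
  ra_le_anti : forall x y, ra_le x y -> ra_le y x -> x = y;
  ra_le_trans : forall x y z, ra_le x y -> ra_le y z -> ra_le x z;
  ra_leD : forall x y z, ra_le x y -> ra_le (x + z) (y + z);
  ra_leZ : forall (c : R) x y, 0 <= c -> ra_le x y -> ra_le (c *: x) (c *: y);
  ra_meet_l : forall x y, ra_le (ra_meet x y) x;
  ra_meet_r : forall x y, ra_le (ra_meet x y) y;
  ra_meet_glb : forall x y z, ra_le z x -> ra_le z y -> ra_le z (ra_meet x y);
  ra_join_l : forall x y, ra_le x (ra_join x y);
  ra_join_r : forall x y, ra_le y (ra_join x y);
  ra_join_lub : forall x y z, ra_le x z -> ra_le y z -> ra_le (ra_join x y) z
}.

Section FAlgebraDefs.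
Variables (R : realType) (A : rieszAlgebra R).

Local Notation "x <=A y" := (ra_le x y) (at level 70).
Local Notation mul := (@ra_mul R A).

Definition ra_pos (x : A) : Prop := 0 <=A x.

Definition ra_abs (x : A) : A := ra_join x (- x).

Definition is_falgebra : Prop :=
  (forall x y : A, ra_pos x -> ra_pos y -> ra_pos (mul x y)) /\
  (forall a b c : A, ra_meet a b = 0 -> ra_pos c ->
     ra_meet (mul a c) b = 0 /\ ra_meet (mul c a) b = 0).

Definition archimedean_ra : Prop :=
  forall x y : A, ra_pos x -> ra_pos y -> (forall n : nat, x *+ n <=A y) -> x = 0.

(* a^(n+1) *)
Definition ra_powS (a : A) (n : nat) : A := iter n (mul a) a.

Definition nilpotent_ra (a : A) : Prop := exists n : nat, ra_powS a n = 0.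

Definition semiprime_ra : Prop := forall a : A, nilpotent_ra a -> a = 0.

Definition is_quasi_inverse (a b : A) : Prop := a + b = mul a b.

Definition quasi_invertible (a : A) : Prop := exists b : A, is_quasi_inverse a b.

Definition bqi_closed : Prop :=
  forall a : A, ra_abs a <=A ra_abs (mul a a - a) -> quasi_invertible a.

End FAlgebraDefs.

(* For a <= 0 the element a^2 - a is a sum of two positive elements, so it
   dominates |a| = -a and bounded quasi-inversion closedness applies.  For the
   sign of a quasi-inverse b = u - v (u, v >= 0 disjoint), multiply
   a + b = a b on the left by v: the f-algebra axioms kill v u and v a u,
   leaving v^2 = v a + v a v <= 0, so v^2 = 0 and v = 0 by semiprimeness. *)
From HB Require Import structures.
From mathcomp Require Import all_boot all_order all_algebra.
From mathcomp Require Import reals.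
Import Order.TTheory GRing.Theory Num.Theory.
Local Open Scope ring_scope.
Set Implicit Arguments. Unset Strict Implicit.

Section RieszAlgebraTheory.
Variables (R : realType) (A : rieszAlgebra R).
Local Notation "x <=A y" := (@ra_le R A x y) (at level 70).
Local Notation mul := (@ra_mul R A).
Local Notation meet := (@ra_meet R A).
Local Notation join := (@ra_join R A).

Lemma ra_mul0l (y : A) : mul 0 y = 0.
Proof. by apply: (addrI (mul 0 y)); rewrite -ra_mulDl !addr0. Qed.

Lemma ra_mul0r (x : A) : mul x 0 = 0.
Proof. by apply: (addrI (mul x 0)); rewrite -ra_mulDr !addr0. Qed.

Lemma ra_mulNl (x y : A) : mul (- x) y = - mul x y.
Proof. by apply: (addrI (mul x y)); rewrite -ra_mulDl !subrr ra_mul0l. Qed.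

Lemma ra_mulNr (x y : A) : mul x (- y) = - mul x y.
Proof. by apply: (addrI (mul x y)); rewrite -ra_mulDr !subrr ra_mul0r. Qed.

Lemma ra_leN2 (x y : A) : x <=A y -> - y <=A - x.
Proof.
move=> h; have := ra_leD (- x - y) h.
by rewrite addrA addrN add0r addrCA addrN addr0.
Qed.

Lemma ra_oppr_ge0 (x : A) : x <=A 0 -> 0 <=A - x.
Proof. by move=> h; rewrite -oppr0; exact: ra_leN2. Qed.

Lemma ra_oppr_le0 (x : A) : 0 <=A x -> - x <=A 0.
Proof. by move=> h; rewrite -oppr0; exact: ra_leN2. Qed.

Lemma ra_lerDl (x y : A) : 0 <=A y -> x <=A x + y.
Proof. by move=> h; have := ra_leD x h; rewrite add0r addrC. Qed.

Lemma ra_addr_le0 (x y : A) : x <=A 0 -> y <=A 0 -> x + y <=A 0.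
Proof. by move=> hx hy; apply: ra_le_trans (ra_leD y hx) _; rewrite add0r. Qed.

Lemma ra_meetC (x y : A) : meet x y = meet y x.
Proof. by apply: ra_le_anti; apply: ra_meet_glb;
  first [exact: ra_meet_l | exact: ra_meet_r]. Qed.

Lemma ra_joinC (x y : A) : join x y = join y x.
Proof. by apply: ra_le_anti; apply: ra_join_lub;
  first [exact: ra_join_l | exact: ra_join_r]. Qed.

Lemma ra_meetxx (x : A) : meet x x = x.
Proof. by apply: ra_le_anti; [exact: ra_meet_l | apply: ra_meet_glb; exact: ra_le_refl]. Qed.

Lemma ra_meetDl (x y z : A) : meet (x + z) (y + z) = meet x y + z.
Proof.
apply: ra_le_anti; last first.
  by apply: ra_meet_glb; apply: ra_leD; [exact: ra_meet_l | exact: ra_meet_r].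
have h : meet (x + z) (y + z) - z <=A meet x y.
  apply: ra_meet_glb; rewrite -[X in _ <=A X](addrK z).
    exact/ra_leD/ra_meet_l.
  exact/ra_leD/ra_meet_r.
by have := ra_leD z h; rewrite subrK.
Qed.

Lemma ra_meetN (x y : A) : meet (- x) (- y) = - join x y.
Proof.
apply: ra_le_anti; last first.
  by apply: ra_meet_glb; apply: ra_leN2; [exact: ra_join_l | exact: ra_join_r].
rewrite -[meet _ _]opprK; apply: ra_leN2; apply: ra_join_lub.
  by rewrite -[x]opprK; apply: ra_leN2; rewrite opprK; exact: ra_meet_l.
by rewrite -[y]opprK; apply: ra_leN2; rewrite opprK; exact: ra_meet_r.
Qed.

Lemma ra_abs_ge0 (x : A) : 0 <=A x -> ra_abs x = x.
Proof.
move=> h; apply: ra_le_anti; last exact: ra_join_l.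
apply: ra_join_lub; first exact: ra_le_refl.
exact: ra_le_trans (ra_oppr_le0 h) h.
Qed.

Lemma ra_abs_le0 (x : A) : x <=A 0 -> ra_abs x = - x.
Proof.
move=> h; have := ra_abs_ge0 (ra_oppr_ge0 h).
by rewrite /ra_abs opprK ra_joinC.
Qed.

Lemma ra_disjoint_decomposition (x : A) :
  exists u v : A, [/\ 0 <=A u, 0 <=A v, x = u - v & meet u v = 0].
Proof.
exists (join x 0), (join x 0 - x); split.
- exact: ra_join_r.
- by rewrite -[X in X <=A _](addrN x); apply/ra_leD/ra_join_l.
- by rewrite opprB addrC subrK.
have := ra_meetDl 0 (- x) (join x 0).
by rewrite add0r addrC => ->; rewrite -{1}oppr0 ra_meetN ra_joinC addNr.
Qed.

Section FAlgebra.
Hypothesis HF : is_falgebra A.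

Lemma ra_mul_ge0 (x y : A) : 0 <=A x -> 0 <=A y -> 0 <=A mul x y.
Proof. exact: (proj1 HF). Qed.

Lemma ra_mul_le0 (x y : A) : x <=A 0 -> y <=A 0 -> 0 <=A mul x y.
Proof.
move=> hx hy; rewrite -[mul x y]opprK -ra_mulNl -ra_mulNr.
by apply: ra_mul_ge0; exact: ra_oppr_ge0.
Qed.

Lemma ra_mul_ge0_le0 (x y : A) : 0 <=A x -> y <=A 0 -> mul x y <=A 0.
Proof.
move=> hx hy; rewrite -[mul x y]opprK -ra_mulNr.
by apply/ra_oppr_le0/ra_mul_ge0 => //; exact: ra_oppr_ge0.
Qed.

Lemma ra_mul_le0_ge0 (x y : A) : x <=A 0 -> 0 <=A y -> mul x y <=A 0.
Proof.
move=> hx hy; rewrite -[mul x y]opprK -ra_mulNl.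
by apply/ra_oppr_le0/ra_mul_ge0 => //; exact: ra_oppr_ge0.
Qed.

(* x /\ y = 0 gives (x y) /\ y = 0 and then (x y) /\ (x y) = 0. *)
Lemma ra_disjoint_mul0 (x y : A) : meet x y = 0 -> mul x y = 0.
Proof.
move=> hxy; have [_ f_disj] := HF.
have hx : 0 <=A x by rewrite -hxy; exact: ra_meet_l.
have hy : 0 <=A y by rewrite -hxy; exact: ra_meet_r.
have [hxyy _] := f_disj _ _ _ hxy hy.
rewrite ra_meetC in hxyy.
by have [_] := f_disj _ _ _ hxyy hx; rewrite ra_meetxx.
Qed.

Lemma ra_abs_le_abs_sqr_sub (a : A) :
  a <=A 0 -> ra_abs a <=A ra_abs (mul a a - a).
Proof.
move=> ha; have hNa := ra_oppr_ge0 ha.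
have hNa_le : - a <=A mul a a - a by rewrite addrC; exact/ra_lerDl/ra_mul_le0.
by rewrite ra_abs_le0 // ra_abs_ge0 //; exact: ra_le_trans hNa_le.
Qed.

Lemma ra_quasi_inverse_negpart_sqr0 (a u v : A) :
  a <=A 0 -> 0 <=A u -> 0 <=A v -> meet u v = 0 ->
  is_quasi_inverse a (u - v) -> mul v v = 0.
Proof.
move=> ha hu hv huv hb.
have hvu : mul v u = 0 by apply: ra_disjoint_mul0; rewrite ra_meetC.
have hvau : mul v (mul a u) = 0.
  apply/eqP; rewrite -oppr_eq0 -ra_mulNr -ra_mulNl; apply/eqP.
  apply: ra_disjoint_mul0; rewrite ra_meetC.
  by have [_ f_disj] := HF; case: (f_disj _ _ _ huv (ra_oppr_ge0 ha)).
have vv_eq : mul v v = mul v a + mul (mul v a) v.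
  have := congr1 (mul v) hb; rewrite ra_mulA !ra_mulDr !ra_mulNr.
  rewrite hvu -ra_mulA hvau add0r sub0r => vb_eq.
  by rewrite -[LHS]opprK -[- mul v v](addKr (mul v a)) vb_eq opprD !opprK.
apply: ra_le_anti; last exact: ra_mul_ge0.
rewrite vv_eq; apply: ra_addr_le0; first exact: ra_mul_ge0_le0.
by apply: ra_mul_le0_ge0 => //; exact: ra_mul_ge0_le0.
Qed.

Hypothesis HS : semiprime_ra A.

Lemma ra_sqr_eq0 (v : A) : mul v v = 0 -> v = 0.
Proof. by move=> hvv; apply: HS; exists 1%N. Qed.

Lemma ra_quasi_inverse_le0_ge0 (a b : A) :
  a <=A 0 -> is_quasi_inverse a b -> 0 <=A b.
Proof.
move=> ha hb; have [u [v [hu hv bE huv]]] := ra_disjoint_decomposition b.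
rewrite bE in hb *.
rewrite (ra_sqr_eq0 (ra_quasi_inverse_negpart_sqr0 ha hu hv huv hb)).
by rewrite subr0.
Qed.

End FAlgebra.
End RieszAlgebraTheory.

Theorem lemma1 (R : realType) (A : rieszAlgebra R) :
  is_falgebra A -> archimedean_ra A -> semiprime_ra A -> bqi_closed A ->
  forall a : A, ra_le a 0 ->
    quasi_invertible a /\
    (forall b : A, is_quasi_inverse a b -> ra_le 0 b).
Proof.
move=> HF _ HS HQ a ha; split.
  exact: HQ _ (ra_abs_le_abs_sqr_sub HF ha).
by move=> b; exact: ra_quasi_inverse_le0_ge0.
Qed.
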